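(* There is no complete pointed metric space $(M,d)$ and no $f\in \mathrm{Lip}_0(M,M)$ such that $\widehat f$ is a wild operator on $\mathcal F(M)$. More precisely, for every such $M$ and $f$: if $R_{\widehat f}$ has nonempty interior then $A_{\widehat f}$ has empty interior.
   Context: A pointed metric space is a metric space $(M,d)$ with a distinguished point $0=0_M$. For pointed metric spaces $M,N$, $\mathrm{Lip}_0(M,N)$ denotes the set of Lipschitz maps $f:M\to N$ with $f(0_M)=0_N$, and $\mathrm{Lip}_0(M)=\mathrm{Lip}_0(M,\mathbb R)$, a Banach space with norm $\mathrm{Lip}(\cdot)$ (the least Lipschitz constant). Let $\delta:M\to \mathrm{Lip}_0(M)^*$, $\delta(x)(\varphi)=\varphi(x)$. The Lipschitz-free space $\mathcal F(M)$ is the norm-closed linear span of $\delta(M)$ in $\mathrm{Lip}_0(M)^*$. For $f\in\mathrm{Lip}_0(M,N)$, $\widehat f:\mathcal F(M)\to\mathcal F(N)$ is the unique bounded linear operator with $\widehat f(\delta_M(x))=\delta_N(f(x))$ for all $x\in M$; $\|\widehat f\|=\mathrm{Lip}(f)$. For a self-map $g$ of a pointed metric space $(X,d)$ (in particular for a bounded linear operator on a Banach space, with base point the origin and the norm distance), write $R_g=\{x:\liminf_{n\to\infty} d(x,g^n(x))=0\}$, $U_g=\{x:\limsup_{n\to\infty} d(0,g^n(x))=\infty\}$, $A_g=\{x:\lim_{n\to\infty} d(0,g^n(x))=\infty\}$. A bounded linear operator $T$ on a Banach space $X$ is called wild if $X=A_T\cup R_T$, $\mathrm{int}(R_T)\neq\emptyset$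 and $\mathrm{int}(A_T)\neq\emptyset$. *)

From Stdlib Require Import Reals List.
Open Scope R_scope.

Section FreeSpaces.
Context {M : Type}.

Definition is_metric (d : M -> M -> R) : Prop :=
  (forall x y, 0 <= d x y) /\
  (forall x y, d x y = 0 <-> x = y) /\
  (forall x y, d x y = d y x) /\
  (forall x y w, d x w <= d x y + d y w).

Definition complete_metric (d : M -> M -> R) : Prop :=
  forall u : nat -> M,
    (forall eps, 0 < eps -> exists N, forall m n, (N <= m)%nat -> (N <= n)%nat ->
        d (u m) (u n) < eps) ->
    exists l, forall eps, 0 < eps -> exists N, forall n, (N <= n)%nat -> d (u n) l < eps.

Definition lip0_self (d : M -> M -> R) (z : M) (f : M -> M) : Prop :=
  f z = z /\ exists L, 0 <= L /\ forall x y, d (f x) (f y) <= L * d x y.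

Definition lipL (d : M -> M -> R) (z : M) (L : R) (phi : M -> R) : Prop :=
  0 <= L /\ phi z = 0 /\ forall x y, Rabs (phi x - phi y) <= L * d x y.

(* functionals on (real functions on) M; only their values on Lip_0(M) matter *)
Definition functional := (M -> R) -> R.

Definition dual_le (d : M -> M -> R) (z : M) (mu : functional) (r : R) : Prop :=
  forall phi L, lipL d z L phi -> Rabs (mu phi) <= r * L.

Definition fadd (mu nu : functional) : functional := fun phi => mu phi + nu phi.
Definition fsub (mu nu : functional) : functional := fun phi => mu phi - nu phi.
Definition fscale (a : R) (mu : functional) : functional := fun phi => a * mu phi.

Definition delta (x : M) : functional := fun phi => phi x.

Definition comb (s : list (R * M)) : functional :=
  fun phi => fold_right (fun p acc => fst p * phi (snd p) + acc) 0 s.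

(* mu belongs to F(M) = norm closure of span delta(M) in Lip_0(M)^* *)
Definition in_free (d : M -> M -> R) (z : M) (mu : functional) : Prop :=
  forall eps, 0 < eps -> exists s, dual_le d z (fsub mu (comb s)) eps.

(* equality as elements of Lip_0(M)^* *)
Definition feq (d : M -> M -> R) (z : M) (mu nu : functional) : Prop :=
  dual_le d z (fsub mu nu) 0.

Definition is_linearization (d : M -> M -> R) (z : M) (f : M -> M)
    (T : functional -> functional) : Prop :=
  (forall mu, in_free d z mu -> in_free d z (T mu)) /\
  (forall a mu nu, in_free d z mu -> in_free d z nu ->
      feq d z (T (fadd (fscale a mu) nu)) (fadd (fscale a (T mu)) (T nu))) /\
  (exists C, 0 <= C /\ forall mu r, in_free d z mu -> dual_le d z mu r ->
      dual_le d z (T mu) (C * r)) /\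
  (forall x, feq d z (T (delta x)) (delta (f x))).

Definition recurrent_set (d : M -> M -> R) (z : M) (T : functional -> functional)
    (x : functional) : Prop :=
  in_free d z x /\
  forall eps, 0 < eps -> forall N, exists n, (N <= n)%nat /\
      dual_le d z (fsub x (Nat.iter n T x)) eps.

Definition escaping_set (d : M -> M -> R) (z : M) (T : functional -> functional)
    (x : functional) : Prop :=
  in_free d z x /\
  forall K, exists N, forall n, (N <= n)%nat -> ~ dual_le d z (Nat.iter n T x) K.

Definition nonempty_interior (d : M -> M -> R) (z : M) (S : functional -> Prop) : Prop :=
  exists mu r, in_free d z mu /\ 0 < r /\
    forall nu, in_free d z nu -> dual_le d z (fsub nu mu) r -> S nu.

End FreeSpaces.

From Stdlib Require Import Reals List Lra Wf_nat Classical FunctionalExtensionality.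
Import ListNotations.
Open Scope R_scope.

(* Suppose the ball B(nu0, s) lies in R_T and B(mu0, r) lies in A_T,
   where T = \hat f.  Pick a finite combination m = Σ b_j δ(y_j) in A_T (close to
   mu0) and a finite combination ν close to nu0.  Perturb ν by adding atoms c_j δ(y_j)
   with tiny, "generic" coefficients: for every test function psi taking values in
   {0,1} on all atoms and their images, the pairing of μ - \hat g μ with psi is
   nonzero as soon as psi separates some y_j from g(y_j).  The perturbed μ still lies
   in R_T, so ‖μ - T^n μ‖ is arbitrarily small for arbitrarily large n.  Testing
   against a (1/w)-Lipschitz ramp around y_j (built in a gap of the finitely many
   distances involved) shows that then d(f^n y_j, y_j) <= 1 for every j, whence
   ‖T^n m‖ <= Σ |b_j| (d(y_j,0) + 1) stays bounded along these n: m cannot escape. *)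

Section FreeSpace.
Context {M : Type}.
Variables (d : M -> M -> R) (z : M).

(* The combination obtained by moving every atom by g: the image of [comb l]
   under the linearization of g. *)
Definition push (g : M -> M) (l : list (R * M)) : list (R * M) :=
  map (fun p => (fst p, g (snd p))) l.

(* Σ |a_i| d(x_i, 0): the triangle-inequality bound for ‖Σ a_i δ(x_i)‖. *)
Definition l1_norm (l : list (R * M)) : R :=
  fold_right (fun p acc => Rabs (fst p) * d (snd p) z + acc) 0 l.

Definition coef_sum (l : list (R * M)) : R :=
  fold_right (fun p acc => Rabs (fst p) + acc) 0 l.

Lemma comb_app (l1 l2 : list (R * M)) (phi : M -> R) :
  comb (l1 ++ l2) phi = comb l1 phi + comb l2 phi.
Proof.
  induction l1 as [|p l IH]; unfold comb in *; simpl; [ring|].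
  rewrite IH; ring.
Qed.

Lemma comb_opp (l : list (R * M)) (phi : M -> R) :
  comb (map (fun p => (- fst p, snd p)) l) phi = - comb l phi.
Proof.
  induction l as [|p l IH]; unfold comb in *; simpl; [ring|].
  rewrite IH; ring.
Qed.

Lemma lipL_nonneg (L : R) (phi : M -> R) : lipL d z L phi -> 0 <= L.
Proof. intros [H _]; exact H. Qed.

Lemma comb_bound (L : R) (phi : M -> R) (l : list (R * M)) :
  lipL d z L phi -> Rabs (comb l phi) <= L * l1_norm l.
Proof.
  intros [HL [Hz Hlip]].
  induction l as [|p l IH]; unfold comb, l1_norm in *; simpl.
  - rewrite Rabs_R0; lra.
  - eapply Rle_trans; [apply Rabs_triang|]. rewrite Rabs_mult.
    assert (Hphi : Rabs (phi (snd p)) <= L * d (snd p) z).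
    { specialize (Hlip (snd p) z). rewrite Hz, Rminus_0_r in Hlip. exact Hlip. }
    assert (Hmul : Rabs (fst p) * Rabs (phi (snd p)) <= Rabs (fst p) * (L * d (snd p) z))
      by (apply Rmult_le_compat_l; [apply Rabs_pos | exact Hphi]).
    lra.
Qed.

Lemma l1_norm_push (g : M -> M) (l : list (R * M)) :
  is_metric d -> (forall p, In p l -> d (g (snd p)) (snd p) <= 1) ->
  l1_norm (push g l) <= l1_norm l + coef_sum l.
Proof.
  intros [_ [_ [_ Htri]]] Hmove.
  induction l as [|p l IH]; unfold l1_norm, coef_sum, push in *; simpl; [lra|].
  assert (H1 := Hmove p (or_introl eq_refl)).
  assert (H2 := Htri (g (snd p)) (snd p) z).
  assert (H3 := Rabs_pos (fst p)).
  assert (IH' := IH (fun q Hq => Hmove q (or_intror Hq))).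
  nra.
Qed.

Lemma in_free_comb (l : list (R * M)) : in_free d z (comb l).
Proof.
  intros eps Heps. exists l. intros phi L HL. unfold fsub.
  rewrite Rminus_diag, Rabs_R0. apply Rmult_le_pos; [lra | exact (lipL_nonneg _ _ HL)].
Qed.

Lemma in_free_delta (x : M) : in_free d z (delta x).
Proof.
  intros eps Heps. exists [(1, x)]. intros phi L HL. unfold fsub, delta, comb; simpl.
  replace (phi x - (1 * phi x + 0)) with 0 by ring. rewrite Rabs_R0.
  apply Rmult_le_pos; [lra | exact (lipL_nonneg _ _ HL)].
Qed.

Lemma in_free_sub (mu nu : functional) :
  in_free d z mu -> in_free d z nu -> in_free d z (fsub mu nu).
Proof.
  intros Hmu Hnu eps Heps.
  destruct (Hmu (eps / 2)) as [s1 H1]; [lra|].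
  destruct (Hnu (eps / 2)) as [s2 H2]; [lra|].
  exists (s1 ++ map (fun p => (- fst p, snd p)) s2).
  intros phi L HL. specialize (H1 phi L HL). specialize (H2 phi L HL).
  unfold fsub in *. rewrite comb_app, comb_opp.
  replace (mu phi - nu phi - (comb s1 phi + - comb s2 phi))
    with ((mu phi - comb s1 phi) - (nu phi - comb s2 phi)) by ring.
  eapply Rle_trans; [apply Rabs_triang|]. rewrite Rabs_Ropp. lra.
Qed.

Lemma dual_zero_vanishes (mu : functional) (phi : M -> R) (L : R) :
  dual_le d z mu 0 -> lipL d z L phi -> mu phi = 0.
Proof.
  intros H HL. specialize (H phi L HL). rewrite Rmult_0_l in H.
  unfold Rabs in H; destruct (Rcase_abs (mu phi)); lra.
Qed.

Lemma feq_val (mu nu : functional) (phi : M -> R) (L : R) :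
  feq d z mu nu -> lipL d z L phi -> mu phi = nu phi.
Proof.
  intros H HL. assert (H0 := dual_zero_vanishes _ _ _ H HL). unfold fsub in H0. lra.
Qed.

Definition jump_sum (l : list (R * M)) (psi : M -> R) (g : M -> M) : R :=
  comb l psi - comb (push g l) psi.

Lemma jump_sum_cons (p : R * M) (l : list (R * M)) (psi : M -> R) (g : M -> M) :
  jump_sum (p :: l) psi g = fst p * (psi (snd p) - psi (g (snd p))) + jump_sum l psi g.
Proof. unfold jump_sum, push, comb; simpl; ring. Qed.

(* Test values do not see additive constants (which break psi(0) = 0). *)
Lemma jump_sum_shift (l : list (R * M)) (psi : M -> R) (g : M -> M) (k : R) :
  jump_sum l (fun y => psi y - k) g = jump_sum l psi g.
Proof.
  induction l as [|p l IH]; [unfold jump_sum, comb; simpl; ring|].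
  rewrite !jump_sum_cons, IH; ring.
Qed.

Definition two_valued (l : list (R * M)) (psi : M -> R) (g : M -> M) : Prop :=
  forall p, In p l -> (psi (snd p) = 0 \/ psi (snd p) = 1) /\
                      (psi (g (snd p)) = 0 \/ psi (g (snd p)) = 1).

Fixpoint sign_sums (l : list (R * M)) : list R :=
  match l with
  | [] => [0]
  | p :: l' => flat_map (fun v => [v; v + fst p; v - fst p]) (sign_sums l')
  end.

Lemma sign_sums_spec (l : list (R * M)) (psi : M -> R) (g : M -> M) :
  two_valued l psi g -> In (jump_sum l psi g) (sign_sums l).
Proof.
  induction l as [|p l IH]; intros Hadm.
  - left; unfold jump_sum, comb; simpl; ring.
  - simpl. apply in_flat_map. exists (jump_sum l psi g). split.
    + apply IH. intros q Hq. apply Hadm. right; exact Hq.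
    + rewrite jump_sum_cons.
      destruct (Hadm p (or_introl eq_refl)) as [[h1|h1] [h2|h2]]; rewrite h1, h2; simpl.
      * left; ring.
      * right; right; left; ring.
      * right; left; ring.
      * left; ring.
Qed.

Lemma finite_min_pos (V : list R) :
  exists eta, 0 < eta /\ forall v, In v V -> v <> 0 -> eta <= Rabs v.
Proof.
  induction V as [|v V [e [He H]]].
  - exists 1; split; [lra|]. intros v [].
  - destruct (Req_dec v 0) as [Hv|Hv].
    + exists e; split; [exact He|]. intros u [<-|Hu] Hu0; [contradiction | auto].
    + exists (Rmin e (Rabs v)); split.
      * apply Rmin_glb_lt; [exact He | apply Rabs_pos_lt; exact Hv].
      * intros u [<-|Hu] Hu0; [apply Rmin_r|].
        eapply Rle_trans; [apply Rmin_l | auto].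
Qed.

Lemma jump_sum_gap (l : list (R * M)) :
  exists eta, 0 < eta /\ forall psi g, two_valued l psi g ->
    jump_sum l psi g <> 0 -> eta <= Rabs (jump_sum l psi g).
Proof.
  destruct (finite_min_pos (sign_sums l)) as [eta [Heta Hmin]].
  exists eta; split; [exact Heta|].
  intros psi g Hadm Hne. apply Hmin; [apply sign_sums_spec, Hadm | exact Hne].
Qed.

Definition generic (lam nu : list (R * M)) : Prop :=
  forall psi g, two_valued (lam ++ nu) psi g ->
    (exists p, In p lam /\ psi (snd p) <> psi (g (snd p))) ->
    jump_sum (lam ++ nu) psi g <> 0.

Lemma generic_cons (lam nu : list (R * M)) (c : R) (x : M) :
  generic lam nu -> 0 < c ->
  (forall psi g, two_valued (lam ++ nu) psi g ->
     jump_sum (lam ++ nu) psi g <> 0 -> c < Rabs (jump_sum (lam ++ nu) psi g)) ->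
  generic ((c, x) :: lam) nu.
Proof.
  intros Hgen Hc Hsmall psi g Hadm [p [Hp Hmove]].
  assert (Hadm' : two_valued (lam ++ nu) psi g) by (intros q Hq; apply Hadm; right; exact Hq).
  destruct (Hadm (c, x) (or_introl eq_refl)) as [Hx Hgx]; simpl in Hx, Hgx.
  change (((c, x) :: lam) ++ nu) with ((c, x) :: (lam ++ nu)).
  rewrite jump_sum_cons; simpl.
  destruct (Req_dec (psi x) (psi (g x))) as [Heq|Hneq].
  - rewrite Heq, Rminus_diag, Rmult_0_r, Rplus_0_l. apply Hgen; [exact Hadm'|].
    exists p; destruct Hp as [<-|Hp]; [contradiction | auto].
  - set (v := jump_sum (lam ++ nu) psi g).
    destruct (Req_dec v 0) as [Hv|Hv].
    + rewrite Hv. destruct Hx as [Hx|Hx]; destruct Hgx as [Hgx|Hgx];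
        rewrite Hx, Hgx in *; try (exfalso; apply Hneq; reflexivity); intro; lra.
    + assert (Hlt := Hsmall psi g Hadm' Hv). fold v in Hlt.
      unfold Rabs in Hlt; destruct (Rcase_abs v);
        destruct Hx as [Hx|Hx]; destruct Hgx as [Hgx|Hgx];
        rewrite Hx, Hgx in *; try (exfalso; apply Hneq; reflexivity); intro; lra.
Qed.

Lemma generic_perturbation (nu : list (R * M)) (xs : list M) (beta : R) :
  (forall x y, 0 <= d x y) -> 0 < beta ->
  exists lam, (forall x, In x xs -> exists c, In (c, x) lam) /\
    l1_norm lam < beta /\ generic lam nu.
Proof.
  intros Hd. revert beta. induction xs as [|x xs IH]; intros beta Hbeta.
  - exists []. split; [intros x []|]. split; [unfold l1_norm; simpl; lra|].
    intros psi g _ [p [[] _]].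
  - destruct (IH (beta / 2)) as [lam [Hcov [Hnorm Hgen]]]; [lra|].
    destruct (jump_sum_gap (lam ++ nu)) as [eta [Heta Hgap]].
    assert (Hdx := Hd x z).
    set (c := Rmin (eta / 2) (beta / (2 * (d x z + 1)))).
    assert (Hc : 0 < c) by (apply Rmin_glb_lt; [lra | apply Rdiv_lt_0_compat; lra]).
    assert (Hc_eta : c <= eta / 2) by apply Rmin_l.
    assert (Hc_beta : c * (d x z + 1) <= beta / 2).
    { assert (Hcb : c <= beta / (2 * (d x z + 1))) by apply Rmin_r.
      apply Rmult_le_compat_r with (r := d x z + 1) in Hcb; [|lra].
      replace (beta / (2 * (d x z + 1)) * (d x z + 1)) with (beta / 2) in Hcb
        by (field; lra). exact Hcb. }
    exists ((c, x) :: lam). split; [|split].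
    + intros y [<-|Hy]; [exists c; left; reflexivity|].
      destruct (Hcov y Hy) as [c' Hc']. exists c'; right; exact Hc'.
    + unfold l1_norm in *; simpl. rewrite Rabs_pos_eq by lra. nra.
    + apply generic_cons; [exact Hgen | exact Hc|].
      intros psi g Hadm Hne. assert (H := Hgap psi g Hadm Hne). lra.
Qed.

Lemma gap_in_interval (V : list R) (a w : R) : 0 < w ->
  exists c, a <= c <= a + INR (length V) * w /\
    forall v, In v V -> v <= c \/ c + w <= v.
Proof.
  intros Hw. revert a.
  induction V as [V IH] using (induction_ltof1 _ (@length R)); intro a.
  destruct (classic (exists v, In v V /\ a < v < a + w)) as [[v [Hv Hav]]|Hnone].
  - set (V' := remove Req_dec_T v V).
    assert (Hlen : (length V' < length V)%nat) by (apply remove_length_lt, Hv).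
    destruct (IH V' Hlen v) as [c [Hc Hgap]].
    exists c; split.
    + assert (HINR : INR (length V') + 1 <= INR (length V))
        by (rewrite <- S_INR; apply le_INR; exact Hlen).
      nra.
    + intros u Hu. destruct (Req_dec_T u v) as [->|Huv]; [left; lra|].
      apply Hgap, in_in_remove; assumption.
  - exists a; split; [pose proof (pos_INR (length V)); nra|].
    intros u Hu. destruct (Rle_or_lt u a); [left; lra|].
    destruct (Rle_or_lt (a + w) u); [right; lra|].
    exfalso; apply Hnone; exists u; split; [exact Hu | lra].
Qed.

Definition ramp (x : M) (c w : R) (y : M) : R :=
  Rmin 1 (Rmax 0 ((c + w - d y x) / w)).

Lemma ramp_one (x y : M) (c w : R) : 0 < w -> d y x <= c -> ramp x c w y = 1.
Proof.
  intros Hw Hy. unfold ramp.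
  assert (1 <= (c + w - d y x) / w)
    by (apply Rmult_le_reg_r with w; [exact Hw|]; unfold Rdiv;
        rewrite Rmult_assoc, Rinv_l by lra; lra).
  rewrite Rmax_right by lra. apply Rmin_left; lra.
Qed.

Lemma ramp_zero (x y : M) (c w : R) : 0 < w -> c + w <= d y x -> ramp x c w y = 0.
Proof.
  intros Hw Hy. unfold ramp.
  assert ((c + w - d y x) / w <= 0)
    by (apply Rmult_le_reg_r with w; [exact Hw|]; unfold Rdiv;
        rewrite Rmult_assoc, Rinv_l by lra; lra).
  rewrite Rmax_left by lra. apply Rmin_right; lra.
Qed.

Lemma ramp_lip (x : M) (c w : R) : is_metric d -> 0 < w ->
  lipL d z (/ w) (fun y => ramp x c w y - ramp x c w z).
Proof.
  intros [_ [_ [Hsym Htri]]] Hw.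
  assert (Hiw : 0 < / w) by (apply Rinv_0_lt_compat; exact Hw).
  split; [lra|]. split; [ring|]. intros a b.
  replace (ramp x c w a - ramp x c w z - (ramp x c w b - ramp x c w z))
    with (ramp x c w a - ramp x c w b) by ring.
  unfold ramp.
  assert (Hclamp : forall u v, Rabs (Rmin 1 (Rmax 0 u) - Rmin 1 (Rmax 0 v)) <= Rabs (u - v)).
  { intros u v. unfold Rmin, Rmax.
    repeat destruct (Rle_dec _ _); unfold Rabs; repeat destruct (Rcase_abs _); lra. }
  eapply Rle_trans; [apply Hclamp|].
  replace ((c + w - d a x) / w - (c + w - d b x) / w) with ((d b x - d a x) * / w)
    by (field; lra).
  rewrite Rabs_mult, (Rabs_pos_eq (/ w)) by lra. rewrite Rmult_comm.
  apply Rmult_le_compat_l; [lra|].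
  assert (H1 := Htri b a x). assert (H2 := Htri a b x). rewrite (Hsym b a) in H1.
  unfold Rabs; destruct (Rcase_abs _); lra.
Qed.

(* The test is a ramp around x placed in a gap of the
   distances from x to the atoms of l and their images. *)
Lemma near_return (l : list (R * M)) (g : M -> M) (x : M) (eta eps : R) :
  is_metric d -> 0 < eta -> 0 <= eps ->
  (forall psi, two_valued l psi g -> psi x <> psi (g x) ->
     eta <= Rabs (jump_sum l psi g)) ->
  dual_le d z (fsub (comb l) (comb (push g l))) eps ->
  eta * d (g x) x <= (2 * INR (length l) + 1) * eps.
Proof.
  intros Hmet Heta Heps Hsep Hclose.
  assert (Hd0 := proj1 Hmet). assert (Hdxx : d x x = 0) by (apply Hmet; reflexivity).
  set (D := d (g x) x). set (k := 2 * INR (length l) + 1).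
  assert (Hk : 1 <= k) by (unfold k; pose proof (pos_INR (length l)); lra).
  destruct (Req_dec D 0) as [HD|HD]; [rewrite HD; nra|].
  assert (HDpos : 0 < D) by (assert (H := Hd0 (g x) x); fold D in H; lra).
  set (w := D / k). assert (Hw : 0 < w) by (unfold w; apply Rdiv_lt_0_compat; lra).
  set (V := map (fun p => d (snd p) x) l ++ map (fun p => d (g (snd p)) x) l).
  destruct (gap_in_interval V 0 w Hw) as [c [[Hc0 Hc1] Hgap]].
  assert (HcD : c + w <= D).
  { replace (INR (length V)) with (k - 1) in Hc1
      by (unfold V, k; rewrite length_app, !length_map, plus_INR; ring).
    replace D with (k * w) by (unfold w; field; lra). nra. }
  set (psi := ramp x c w).
  assert (Hlevel : forall y, In (d y x) V -> psi y = 0 \/ psi y = 1).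
  { intros y Hy. destruct (Hgap _ Hy);
      [right; apply ramp_one | left; apply ramp_zero]; assumption. }
  assert (Hadm : two_valued l psi g).
  { intros p Hp. split; apply Hlevel; apply in_or_app;
      [left | right]; apply in_map_iff; exists p; auto. }
  assert (Hmove : psi x <> psi (g x))
    by (unfold psi; rewrite ramp_one, ramp_zero by (fold D; lra); lra).
  assert (Hlow := Hsep psi Hadm Hmove).
  assert (Hup := Hclose _ _ (ramp_lip x c w Hmet Hw)).
  change (Rabs (jump_sum l (fun y => psi y - psi z) g) <= eps * / w) in Hup.
  rewrite jump_sum_shift in Hup.
  unfold w in Hup; rewrite Rinv_div in Hup.
  assert (Hmul : eta * D <= eps * (k / D) * D) by (apply Rmult_le_compat_r; lra).
  replace (eps * (k / D) * D) with (k * eps) in Hmul by (field; lra).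
  exact Hmul.
Qed.

Lemma interior_perturbed (S : functional -> Prop) :
  nonempty_interior d z S ->
  exists s beta, 0 < beta /\ forall lam, l1_norm lam < beta -> S (comb (lam ++ s)).
Proof.
  intros [mu [r [Hmu [Hr HS]]]].
  destruct (Hmu (r / 2)) as [s Hs]; [lra|].
  exists s, (r / 2); split; [lra|]. intros lam Hlam.
  apply HS; [apply in_free_comb|]. intros phi L HL.
  assert (Happrox := Hs phi L HL). assert (HL0 := lipL_nonneg _ _ HL).
  assert (Hlam_phi := comb_bound L phi lam HL).
  unfold fsub in *. rewrite comb_app.
  replace (comb lam phi + comb s phi - mu phi)
    with (comb lam phi - (mu phi - comb s phi)) by ring.
  eapply Rle_trans; [apply Rabs_triang|]. rewrite Rabs_Ropp.
  assert (L * l1_norm lam <= L * (r / 2)) by (apply Rmult_le_compat_l; lra).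
  lra.
Qed.

Section Linearization.
Variables (f : M -> M) (T : @functional M -> @functional M).
Hypothesis HT : is_linearization d z f T.

Lemma lin_respects_eq (mu mu' : functional) :
  in_free d z mu -> in_free d z mu' ->
  (forall phi L, lipL d z L phi -> mu phi = mu' phi) ->
  forall phi L, lipL d z L phi -> T mu phi = T mu' phi.
Proof.
  destruct HT as [_ [Hlin [[C [_ Hbnd]] _]]].
  intros Hmu Hmu' Heq phi L HL.
  assert (Hfr : in_free d z (fsub mu mu')) by (apply in_free_sub; assumption).
  assert (Hzero : dual_le d z (fsub mu mu') 0).
  { intros psi K HK. unfold fsub. rewrite (Heq psi K HK), Rminus_diag, Rabs_R0. lra. }
  assert (HTzero := Hbnd _ _ Hfr Hzero). rewrite Rmult_0_r in HTzero.
  assert (Hsplit := Hlin 1 (fsub mu mu') mu' Hfr Hmu').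
  replace (fadd (fscale 1 (fsub mu mu')) mu') with mu in Hsplit
    by (apply functional_extensionality; intro psi; unfold fadd, fscale, fsub; ring).
  rewrite (feq_val _ _ _ _ Hsplit HL). unfold fadd, fscale.
  rewrite (dual_zero_vanishes _ _ _ HTzero HL). ring.
Qed.

Lemma lin_comb (l : list (R * M)) :
  forall phi L, lipL d z L phi -> T (comb l) phi = comb (push f l) phi.
Proof.
  destruct HT as [_ [Hlin [[C [_ Hbnd]] Hdelta]]].
  induction l as [|p l IH]; intros phi L HL.
  - assert (Hzero : dual_le d z (comb []) 0)
      by (intros psi K HK; unfold comb; simpl; rewrite Rabs_R0; lra).
    assert (H := Hbnd _ _ (in_free_comb []) Hzero). rewrite Rmult_0_r in H.
    exact (dual_zero_vanishes _ _ _ H HL).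
  - change (comb (p :: l)) with (fadd (fscale (fst p) (delta (snd p))) (comb l)).
    rewrite (feq_val _ _ _ _ (Hlin _ _ _ (in_free_delta (snd p)) (in_free_comb l)) HL).
    unfold fadd, fscale.
    rewrite (feq_val _ _ _ _ (Hdelta (snd p)) HL), (IH phi L HL).
    reflexivity.
Qed.

Lemma iter_in_free (n : nat) (mu : functional) :
  in_free d z mu -> in_free d z (Nat.iter n T mu).
Proof.
  intros Hmu. induction n as [|n IH]; [exact Hmu|]. simpl. apply (proj1 HT), IH.
Qed.

Lemma iter_lin_comb (n : nat) (l : list (R * M)) :
  forall phi L, lipL d z L phi ->
    Nat.iter n T (comb l) phi = comb (push (Nat.iter n f) l) phi.
Proof.
  induction n as [|n IH]; intros phi L HL.
  - simpl. unfold push. rewrite map_ext with (g := fun p => p), map_id; [reflexivity|].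
    intros [a b]; reflexivity.
  - simpl.
    rewrite (lin_respects_eq _ (comb (push (Nat.iter n f) l))
               (iter_in_free n _ (in_free_comb l)) (in_free_comb _) IH phi L HL).
    rewrite (lin_comb _ phi L HL). unfold push. rewrite map_map. reflexivity.
Qed.

Lemma generic_recurrence_returns (lam nu : list (R * M)) :
  is_metric d -> generic lam nu -> recurrent_set d z T (comb (lam ++ nu)) ->
  forall N, exists n, (N <= n)%nat /\
    forall p, In p lam -> d (Nat.iter n f (snd p)) (snd p) <= 1.
Proof.
  intros Hmet Hgen [_ Hrec] N.
  set (l := lam ++ nu).
  destruct (jump_sum_gap l) as [eta [Heta Hgap]].
  set (k := 2 * INR (length l) + 1).
  assert (Hk : 1 <= k) by (unfold k; pose proof (pos_INR (length l)); lra).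
  set (eps := eta / k). assert (Heps : 0 < eps) by (unfold eps; apply Rdiv_lt_0_compat; lra).
  destruct (Hrec eps Heps N) as [n [Hn Hclose]].
  exists n; split; [exact Hn|]. intros p Hp.
  assert (Hpush : dual_le d z (fsub (comb l) (comb (push (Nat.iter n f) l))) eps).
  { intros phi L HL. unfold fsub. rewrite <- (iter_lin_comb n l phi L HL). apply Hclose, HL. }
  assert (Hret := near_return l (Nat.iter n f) (snd p) eta eps Hmet Heta (Rlt_le _ _ Heps)).
  fold k in Hret. replace (k * eps) with eta in Hret by (unfold eps; field; lra).
  assert (Hbound : eta * d (Nat.iter n f (snd p)) (snd p) <= eta * 1).
  { rewrite Rmult_1_r. apply Hret; [|exact Hpush].
    intros psi Hadm Hmove. apply Hgap; [exact Hadm|].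
    apply Hgen; [exact Hadm|]. exists p; split; assumption. }
  exact (Rmult_le_reg_l _ _ _ Heta Hbound).
Qed.

Lemma bounded_orbit (n : nat) (s : list (R * M)) :
  is_metric d -> (forall p, In p s -> d (Nat.iter n f (snd p)) (snd p) <= 1) ->
  dual_le d z (Nat.iter n T (comb s)) (l1_norm s + coef_sum s).
Proof.
  intros Hmet Hmove phi L HL.
  rewrite (iter_lin_comb n s phi L HL).
  eapply Rle_trans; [apply (comb_bound _ _ _ HL)|].
  rewrite Rmult_comm. apply Rmult_le_compat_r; [exact (lipL_nonneg _ _ HL)|].
  apply l1_norm_push; assumption.
Qed.

End Linearization.
End FreeSpace.

Theorem theorem1p3 (M : Type) (d : M -> M -> R) (z : M) (f : M -> M)
    (T : functional -> functional) :
  is_metric d -> complete_metric d -> lip0_self d z f ->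
  is_linearization d z f T ->
  nonempty_interior d z (recurrent_set d z T) ->
  ~ nonempty_interior d z (escaping_set d z T).
Proof.
  intros Hmet _ _ HT HR HA.
  destruct (interior_perturbed _ _ _ HA) as [sm [ba [Hba HAsm]]].
  assert (Hesc : escaping_set d z T (comb sm))
    by (apply (HAsm []); unfold l1_norm; simpl; lra).
  (* a recurrent combination containing the atoms of sm generically *)
  destruct (interior_perturbed _ _ _ HR) as [sn [bn [Hbn HRsn]]].
  destruct (generic_perturbation d z sn (map snd sm) bn (proj1 Hmet) Hbn)
    as [lam [Hcov [Hsmall Hgen]]].
  destruct Hesc as [_ Hesc].
  destruct (Hesc (l1_norm d z sm + coef_sum sm)) as [N HN].
  destruct (generic_recurrence_returns _ _ _ _ HT lam sn Hmet Hgen (HRsn lam Hsmall) N)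
    as [n [Hn Hret]].
  (* along these iterates the atoms of sm return, so T^n m stays bounded *)
  apply (HN n Hn). apply (bounded_orbit d z f T HT); [exact Hmet|].
  intros p Hp. destruct (Hcov (snd p) (in_map _ _ _ Hp)) as [c Hc].
  exact (Hret (c, snd p) Hc).
Qed.
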